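(* Let $P$ be a Poisson tensor on $\mathbb{R}^3$, let $H\in C^\infty(\mathbb{R}^3)$, let $S\in C^\infty(\mathbb{R}^3)$ satisfy $PdS=0$, and let $g$ be the symmetric tensor with components $g^{ij}=H^iH^j-\delta^{ij}\sum_k H^kH^k$. If $x$ is a regular equilibrium of the system $\dot{x}=PdH+gdS$, then either $x$ is a critical point of $H$, or the level sets of $S$ and of $H$ through $x$ are tangent to each other at $x$.
   Context: $\mathbb{R}^3$ carries the standard Euclidean metric, used to identify tangent and cotangent spaces with $\mathbb{R}^3$; $H^i=H_i=\partial H/\partial x^i$. A Poisson tensor is a skew-symmetric bivector field satisfying the Jacobi identity. A regular equilibrium is an equilibrium point $x$ with $P(x)\neq 0$. *)

From Stdlib Require Import Reals.
From Coquelicot Require Import Coquelicot.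
Open Scope R_scope.

Definition V := (R * R * R)%type.

Inductive idx := I0 | I1 | I2.

Definition sum3 (f : idx -> R) : R := f I0 + f I1 + f I2.

Definition shift (x : V) (i : idx) (t : R) : V :=
  match x with (a, b, c) =>
    match i with
    | I0 => (a + t, b, c)
    | I1 => (a, b + t, c)
    | I2 => (a, b, c + t)
    end
  end.

Definition partial (i : idx) (f : V -> R) (x : V) : R :=
  Derive (fun t => f (shift x i t)) 0.

Definition cont3 (f : V -> R) : Prop := forall x : V, continuous f x.

Fixpoint smoothN (n : nat) (f : V -> R) : Prop :=
  match n with
  | O => cont3 f
  | S m => cont3 f /\
           (forall i x, ex_derive (fun t => f (shift x i t)) 0) /\
           (forall i, smoothN m (partial i f))
  end.

Definition smooth (f : V -> R) : Prop := forall n, smoothN n f.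

Definition poisson_tensor (P : idx -> idx -> V -> R) : Prop :=
  (forall i j, smooth (P i j)) /\
  (forall i j x, P i j x = - P j i x) /\
  (forall i j k x,
      sum3 (fun l => P l i x * partial l (P j k) x
                   + P l j x * partial l (P k i) x
                   + P l k x * partial l (P i j) x) = 0).

Definition kdelta (i j : idx) : R :=
  match i, j with
  | I0, I0 | I1, I1 | I2, I2 => 1
  | _, _ => 0
  end.

Definition gmetric (H : V -> R) (i j : idx) (x : V) : R :=
  partial i H x * partial j H x
  - kdelta i j * sum3 (fun k => partial k H x * partial k H x).

Definition vfield (P : idx -> idx -> V -> R) (H S : V -> R) (x : V) (i : idx) : R :=
  sum3 (fun j => P i j x * partial j H x)
  + sum3 (fun j => gmetric H i j x * partial j S x).

Definition equilibrium P H S x : Prop := forall i, vfield P H S x i = 0.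

Definition regular_equilibrium P H S x : Prop :=
  equilibrium P H S x /\ exists i j, P i j x <> 0.

Definition critical_point (H : V -> R) (x : V) : Prop :=
  forall i, partial i H x = 0.

(* The level sets of S and H through x are tangent at x:
   dS(x) and dH(x) are linearly dependent (dS /\ dH = 0 at x). *)
Definition level_sets_tangent (S H : V -> R) (x : V) : Prop :=
  exists a b : R, (a <> 0 \/ b <> 0) /\
    forall i, a * partial i S x + b * partial i H x = 0.

(* At a point x the theorem is linear algebra in R^3.  The skew matrix P(x)
   acts as p × _ for a nonzero vector p, and g dS = (dH.dS) dH - |dH|^2 dS.
   From P dS = 0, dS is parallel to p, so the equilibrium equation puts
   w = p × dH in the plane spanned by p and dH; but w is orthogonal to that
   plane, hence w = 0.  Then P dH = 0, and the equilibrium equation reduces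
   to |dH|^2 dS = (dH.dS) dH. *)

From Stdlib Require Import Reals Lra Psatz.
From Coquelicot Require Import Coquelicot.
Open Scope R_scope.

Definition vec := idx -> R.

Definition dot (u v : vec) : R := sum3 (fun i => u i * v i).

Definition cross (u v : vec) : vec := fun i =>
  match i with
  | I0 => u I1 * v I2 - u I2 * v I1
  | I1 => u I2 * v I0 - u I0 * v I2
  | I2 => u I0 * v I1 - u I1 * v I0
  end.

Definition mulv (M : idx -> idx -> R) (v : vec) : vec :=
  fun i => sum3 (fun j => M i j * v j).

Definition skew (M : idx -> idx -> R) : Prop := forall i j, M i j = - M j i.

Definition axial (M : idx -> idx -> R) : vec := fun i =>
  match i with
  | I0 => M I2 I1
  | I1 => M I0 I2
  | I2 => M I1 I0
  end.

Definition grad (f : V -> R) (x : V) : vec := fun i => partial i f x.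

Lemma dot_comm (u v : vec) : dot u v = dot v u.
Proof. unfold dot, sum3. ring. Qed.

Lemma dot_eq_r (u v v' : vec) : (forall i, v i = v' i) -> dot u v = dot u v'.
Proof. intro E. unfold dot, sum3. rewrite !E. reflexivity. Qed.

Lemma dot_self_eq0 (v : vec) : dot v v = 0 -> forall i, v i = 0.
Proof. unfold dot, sum3. intros E i. destruct i; nra. Qed.

Lemma dot_self_neq0 (v : vec) (i : idx) : v i <> 0 -> dot v v <> 0.
Proof. intros Hi E. exact (Hi (dot_self_eq0 v E i)). Qed.

Lemma dot_cross_self_l (u v : vec) : dot (cross u v) u = 0.
Proof. unfold dot, cross, sum3. ring. Qed.

Lemma dot_cross_self_r (u v : vec) : dot (cross u v) v = 0.
Proof. unfold dot, cross, sum3. ring. Qed.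

Lemma cross_crossl (u v w : vec) (i : idx) :
  cross (cross u v) w i = v i * dot u w - u i * dot v w.
Proof. unfold dot, sum3. destruct i; simpl; ring. Qed.

Lemma parallel_of_cross_eq0 (p s : vec) :
  (forall i, cross p s i = 0) -> forall i, dot p p * s i = dot p s * p i.
Proof.
  intros Hps i.
  assert (E : cross (cross p s) p i = 0).
  { revert Hps. generalize (cross p s). intros c Hc. destruct i; simpl; rewrite !Hc; ring. }
  rewrite cross_crossl, (dot_comm s p) in E. lra.
Qed.

Lemma skew_diag (M : idx -> idx -> R) : skew M -> forall i, M i i = 0.
Proof. intros HM i. pose proof (HM i i). lra. Qed.

Lemma skew_mulv (M : idx -> idx -> R) (v : vec) (i : idx) :
  skew M -> mulv M v i = cross (axial M) v i.
Proof.
  intro HM. unfold mulv, sum3.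
  destruct i; simpl;
    rewrite ?(skew_diag M HM), ?(HM I1 I0), ?(HM I2 I0), ?(HM I2 I1); ring.
Qed.

Lemma axial_neq0 (M : idx -> idx -> R) (i j : idx) :
  skew M -> M i j <> 0 -> dot (axial M) (axial M) <> 0.
Proof.
  intros HM Hij.
  pose proof (skew_diag M HM) as Hd.
  pose proof (HM I1 I0). pose proof (HM I2 I0). pose proof (HM I2 I1).
  destruct i, j;
    first [ exfalso; exact (Hij (Hd _))
          | apply (dot_self_neq0 _ I0); simpl; lra
          | apply (dot_self_neq0 _ I1); simpl; lra
          | apply (dot_self_neq0 _ I2); simpl; lra ].
Qed.

Lemma cross_in_plane_eq0 (p h s : vec) :
  dot p p <> 0 ->
  (forall i, cross p s i = 0) ->
  (forall i, cross p h i = dot h h * s i - dot h s * h i) ->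
  forall i, cross p h i = 0.
Proof.
  intros Hp Hps Hw.
  set (w := cross p h).
  assert (Hws : dot p p * dot w s = 0).
  { transitivity (dot w (fun i => dot p p * s i)); [unfold dot, sum3; ring |].
    rewrite (dot_eq_r _ _ _ (parallel_of_cross_eq0 p s Hps)).
    transitivity (dot p s * dot w p); [unfold dot, sum3; ring |].
    unfold w. rewrite dot_cross_self_l. ring. }
  assert (Hww : dot w w = dot h h * dot w s - dot h s * dot w h).
  { rewrite (dot_eq_r _ _ _ Hw). unfold dot, sum3. ring. }
  assert (Hww0 : dot w w = 0).
  { apply (Rmult_eq_reg_l (dot p p)); [| exact Hp].
    rewrite Hww. unfold w at 2. rewrite dot_cross_self_r.
    replace (dot p p * (dot h h * dot w s - dot h s * 0))
      with (dot h h * (dot p p * dot w s)) by ring.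
    rewrite Hws. ring. }
  exact (dot_self_eq0 w Hww0).
Qed.

Lemma gmetric_apply (H : V -> R) (x : V) (v : vec) (i : idx) :
  sum3 (fun j => gmetric H i j x * v j)
  = grad H x i * dot (grad H x) v - dot (grad H x) (grad H x) * v i.
Proof. unfold gmetric, grad, dot, sum3. destruct i; simpl; ring. Qed.

Lemma vfield_grad (P : idx -> idx -> V -> R) (H S : V -> R) (x : V) (i : idx) :
  vfield P H S x i
  = mulv (fun k l => P k l x) (grad H x) i
    + (grad H x i * dot (grad H x) (grad S x)
       - dot (grad H x) (grad H x) * grad S x i).
Proof. unfold vfield. rewrite <- (gmetric_apply H x (grad S x)). reflexivity. Qed.

Theorem mainTheorem5 :
  forall (P : idx -> idx -> V -> R) (H S : V -> R),
    poisson_tensor P ->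
    smooth H ->
    smooth S ->
    (forall x i, sum3 (fun j => P i j x * partial j S x) = 0) ->
    forall x : V,
      regular_equilibrium P H S x ->
      critical_point H x \/ level_sets_tangent S H x.
Proof.
  intros P H S [_ [HP _]] _ _ PdS x [Heq [i [j Hij]]].
  pose (M := fun k l => P k l x).
  assert (HM : skew M) by (intros k l; apply HP).
  assert (Hps : forall k, cross (axial M) (grad S x) k = 0).
  { intro k. rewrite <- (skew_mulv M _ _ HM). exact (PdS x k). }
  assert (Hph : forall k, cross (axial M) (grad H x) k = 0).
  { apply (cross_in_plane_eq0 _ _ (grad S x) (axial_neq0 M i j HM Hij) Hps).
    intro k. pose proof (Heq k) as Ek.
    rewrite vfield_grad, (skew_mulv M _ _ HM) in Ek. lra. }
  assert (Htan : forall k, dot (grad H x) (grad H x) * grad S x k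
                           - dot (grad H x) (grad S x) * grad H x k = 0).
  { intro k. pose proof (Heq k) as Ek.
    rewrite vfield_grad, (skew_mulv M _ _ HM), Hph in Ek. lra. }
  destruct (Req_dec (dot (grad H x) (grad H x)) 0) as [Hcrit | Hnz].
  - left. exact (dot_self_eq0 _ Hcrit).
  - right. exists (dot (grad H x) (grad H x)), (- dot (grad H x) (grad S x)).
    split; [left; exact Hnz |].
    intro k. pose proof (Htan k). unfold grad in *. lra.
Qed.
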